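(* Let $N$ be a finite set and $\underline{N}\colon\mathrm{Aff}/\mathbb{Z}\to(\mathrm{Sets})$ the associated constant sheaf. For every ring $B$ the maps $\underline{N}(B)\to\underline{N}(B[[t]])\to\underline{N}(B((t)))$ are bijective. Equivalently, if $B((t))\simeq C_1\times\cdots\times C_l$ (resp. $B[[t]]\simeq C_1\times\cdots\times C_l$) then $B\simeq B_1\times\cdots\times B_l$ with $C_j=B_j((t))$ (resp. $C_j=B_j[[t]]$).
   Context: $B((t))=B[[t]][t^{-1}]$. The constant sheaf $\underline{N}$ assigns to $\mathrm{Spec}\,C$ the set of locally constant functions $\mathrm{Spec}\,C\to N$. *)

From HB Require Import structures.
From mathcomp Require Import all_boot all_algebra.
From Stdlib Require Import ClassicalEpsilon.
Set Implicit Arguments. Unset Strict Implicit. Unset Printing Implicit Defensive.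
Import GRing.Theory Num.Theory.
Local Open Scope ring_scope.

(** A commutative ring presented as a subset [rd_S] of an ambient type
    [rd_T] closed under the given operations (closure is not needed in
    the definitions below: all quantifications are restricted to [rd_S]). *)
Record ringdata := RD {
  rd_T : Type;
  rd_S : rd_T -> Prop;
  rd_0 : rd_T;
  rd_1 : rd_T;
  rd_add : rd_T -> rd_T -> rd_T;
  rd_mul : rd_T -> rd_T -> rd_T }.
Arguments rd_S : clear implicits.
Arguments rd_0 : clear implicits.
Arguments rd_1 : clear implicits.
Arguments rd_add : clear implicits.
Arguments rd_mul : clear implicits.

Definition is_prime (R : ringdata) (P : rd_T R -> Prop) : Prop :=
  (forall x, P x -> rd_S R x) /\
  P (rd_0 R) /\
  (forall x y, P x -> P y -> P (rd_add R x y)) /\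
  (forall a x, rd_S R a -> P x -> P (rd_mul R a x)) /\
  ~ P (rd_1 R) /\
  (forall a b, rd_S R a -> rd_S R b -> P (rd_mul R a b) -> P a \/ P b).

(** Locally constant functions Spec R -> N (only values at primes matter):
    every prime p has a basic open neighbourhood D(s) on which f is constant. *)
Definition locconst (N : Type) (R : ringdata) (f : (rd_T R -> Prop) -> N) :=
  forall p, is_prime p ->
    exists s, [/\ rd_S R s, ~ p s &
      forall q, is_prime q -> ~ q s -> f q = f p].

(** Pull back along a ring map h : R1 -> R2, via Spec R2 -> Spec R1, Q |-> h^-1 Q. *)
Definition preim (R1 R2 : ringdata) (h : rd_T R1 -> rd_T R2)
  (Q : rd_T R2 -> Prop) : rd_T R1 -> Prop := fun x => rd_S R1 x /\ Q (h x).

Definition pullback (N : Type) (R1 R2 : ringdata) (h : rd_T R1 -> rd_T R2)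
  (f : (rd_T R1 -> Prop) -> N) : (rd_T R2 -> Prop) -> N :=
  fun Q => f (preim h Q).

(** The induced map N(R1) -> N(R2) is well defined and bijective
    (elements of N(R) = locally constant functions, compared on primes). *)
Definition induced_bijective (N : Type) (R1 R2 : ringdata)
  (h : rd_T R1 -> rd_T R2) : Prop :=
  [/\ (forall f : (rd_T R1 -> Prop) -> N, locconst f -> locconst (pullback h f)),
      (forall f1 f2 : (rd_T R1 -> Prop) -> N, locconst f1 -> locconst f2 ->
         (forall Q, is_prime Q -> pullback h f1 Q = pullback h f2 Q) ->
         forall P, is_prime P -> f1 P = f2 P) &
      (forall g : (rd_T R2 -> Prop) -> N, locconst g ->
         exists f, locconst f /\ forall Q, is_prime Q -> g Q = pullback h f Q)].

Section Rings.
Variable B : comPzRingType.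

Definition ring_of : ringdata :=
  @RD B (fun _ => True) 0 1 +%R *%R.

Definition ps_mul (f g : nat -> B) : nat -> B :=
  fun n => \sum_(i < n.+1) f i * g (n - i)%N.
Definition ps_ring : ringdata :=
  @RD (nat -> B) (fun _ => True) (fun _ => 0) (fun n => (n == 0%N)%:R)
      (fun f g n => f n + g n) ps_mul.

Definition ls_bounded (f : int -> B) : Prop :=
  exists n : nat, forall k : int, (k < - (n%:Z))%R -> f k = 0.

Definition ls_bound (f : int -> B) : nat :=
  match excluded_middle_informative (ls_bounded f) with
  | left H => proj1_sig (constructive_indefinite_description _ H)
  | right _ => 0%N
  end.

(* (fg)(k) = sum_{i = -nf}^{k + ng} f(i) g(k - i) *)
Definition ls_mul (f g : int -> B) : int -> B :=
  fun k =>
    let nf := ls_bound f in let ng := ls_bound g in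
    if (0 <= k + nf%:Z + ng%:Z)%R then
      \sum_(j < (absz (k + nf%:Z + ng%:Z)%R).+1) f (j%:Z - nf%:Z)%R * g (k - j%:Z + nf%:Z)%R
    else 0.

Definition ls_ring : ringdata :=
  @RD (int -> B) ls_bounded (fun _ => 0) (fun k => (k == 0)%:R)
      (fun f g k => f k + g k) ls_mul.

Definition const_ps (b : B) : nat -> B := fun n => if n == 0%N then b else 0.
Definition ps_to_ls (f : nat -> B) : int -> B :=
  fun k => match k with Posz n => f n | Negz _ => 0 end.

End Rings.

(* Fibres of a locally constant g : Spec R -> N are of the form D(e), e idempotent:
   the opens D(s) on which g is constant generate the unit ideal, giving 1 = x + y with
   x in every prime off the fibre and y in every prime on it; xy is then nilpotent, and
   the comaximal pair x^k, y^k splits off e. So g does not separate two primes that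
   contain the same idempotents.
   Idempotents of B((t)), hence of B[[t]], are constants. For e idempotent,
   p |-> [e in p((t))] is locally constant on Spec B, which yields an idempotent c in B
   with e = c modulo every p((t)). Then d = e - c satisfies d^3 = d and d^2 is an
   idempotent with nilpotent coefficients; writing d^2 = nu + rho with nu its polar part
   (nilpotent) and rho of positive order, d^2 = (nu + rho)^m has arbitrarily large order.
   Consequently primes with the same constants are not separated, and Q |-> ev0^-1 Q and
   P |-> (B-part of P)((t)) are sections of Spec B[[t]] -> Spec B and
   Spec B((t)) -> Spec B[[t]] as far as locally constant functions can tell. *)

From Pilot Require Import Defs.
From HB Require Import structures.
From mathcomp Require Import all_boot all_algebra.
From Stdlib Require Import ClassicalEpsilon.
From mathcomp Require Import boolp classical_sets.
From mathcomp Require Import ring zify.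
Set Implicit Arguments. Unset Strict Implicit. Unset Printing Implicit Defensive.
Import GRing.Theory.
Local Open Scope ring_scope.
Local Open Scope classical_set_scope.

(** * Prime ideals and locally constant functions on Spec *)

Section PrimeIdeals.
Variable R : comPzRingType.
Implicit Types (P I A : R -> Prop) (a u x y e : R).

Definition prime_ideal P := @is_prime (ring_of R) P.

Lemma prime_idealE P : prime_ideal P <->
  [/\ P 0, (forall x y, P x -> P y -> P (x + y)), (forall a x, P x -> P (a * x)),
      ~ P 1 & (forall x y, P (x * y) -> P x \/ P y)].
Proof.
rewrite /prime_ideal /is_prime /=; split.
  by case=> _ [? [? [PM [? PP]]]]; split=> // [a x|x y] H; [exact: PM|exact: PP].
case=> P0 PD PM P1 PP; split=> //; split=> //; split=> //.
by split=> [a x _|]; [exact: PM|split=> // x y _ _; exact: PP].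
Qed.

Section Prime.
Variable P : R -> Prop.
Hypothesis PP : prime_ideal P.

Lemma prime_ideal0 : P 0. Proof. by case/prime_idealE: PP. Qed.

Lemma prime_idealD x y : P x -> P y -> P (x + y).
Proof. by case/prime_idealE: PP => _ PD _ _ _; exact: PD. Qed.

Lemma prime_idealMl a x : P x -> P (a * x).
Proof. by case/prime_idealE: PP => _ _ PM _ _; exact: PM. Qed.

Lemma prime_idealMr a x : P x -> P (x * a).
Proof. by rewrite mulrC; exact: prime_idealMl. Qed.

Lemma prime_ideal_proper : ~ P 1. Proof. by case/prime_idealE: PP. Qed.

Lemma prime_idealM x y : P (x * y) -> P x \/ P y.
Proof. by case/prime_idealE: PP => _ _ _ _; exact. Qed.

Lemma prime_idealB x y : P x -> P y -> P (x - y).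
Proof. by move=> Px Py; rewrite -mulN1r; apply: prime_idealD => //; exact: prime_idealMl. Qed.

Lemma prime_ideal_sum (J : Type) (r : seq J) (Q : pred J) (F : J -> R) :
  (forall i, Q i -> P (F i)) -> P (\sum_(i <- r | Q i) F i).
Proof.
move=> H; elim: r => [|i r IH]; first by rewrite big_nil; exact: prime_ideal0.
by rewrite big_cons; case: ifP => Qi //; exact: prime_idealD (H _ Qi) IH.
Qed.

Lemma prime_idealX x n : P (x ^+ n) -> P x.
Proof.
elim: n => [|n IH]; first by rewrite expr0 => /prime_ideal_proper.
by rewrite exprS => /prime_idealM [].
Qed.

Lemma prime_ideal_nilpotent x n : x ^+ n = 0 -> P x.
Proof. by move=> xn; apply: (@prime_idealX x n); rewrite xn; exact: prime_ideal0. Qed.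

Lemma prime_ideal_idem e : e * e = e -> P e \/ P (1 - e).
Proof.
by move=> ee; apply: prime_idealM; rewrite mulrBr mulr1 ee subrr; exact: prime_ideal0.
Qed.

End Prime.

Definition ideal I :=
  [/\ I 0, (forall x y, I x -> I y -> I (x + y)) & (forall a x, I x -> I (a * x))].

Definition avoids_powers a I := forall n, ~ I (a ^+ n).

Definition ideal_adjoin I u : R -> Prop := fun z => exists w r, I w /\ z = w + r * u.

Lemma ideal_adjoin_ideal I u : ideal I -> ideal (ideal_adjoin I u).
Proof.
case=> I0 ID IM; split.
- by exists 0, 0; rewrite mul0r addr0.
- move=> _ _ [w1 [r1 [Iw1 ->]]] [w2 [r2 [Iw2 ->]]].
  by exists (w1 + w2), (r1 + r2); split; [exact: ID|ring].
- move=> a _ [w [r [Iw ->]]]; exists (a * w), (a * r).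
  by split; [exact: IM|rewrite mulrDr mulrA].
Qed.

Lemma ideal_adjoin_sub I u : I `<=` ideal_adjoin I u.
Proof. by move=> z Iz; exists z, 0; rewrite mul0r addr0. Qed.

Lemma ideal_adjoin_mem I u : ideal I -> ideal_adjoin I u u.
Proof. by case=> I0 _ _; exists 0, 1; rewrite mul1r add0r. Qed.

Lemma maximal_avoiding_prime a A : ideal A -> avoids_powers a A ->
  (forall B, ideal B -> A `<=` B -> avoids_powers a B -> B `<=` A) -> prime_ideal A.
Proof.
move=> IA Aa Amax; have [A0 AD AM] := IA.
have adjoin_power u : ~ A u -> exists i, ideal_adjoin A u (a ^+ i).
  move=> Au; apply: contrapT => /forallNP nu; apply: Au.
  apply: (Amax _ (ideal_adjoin_ideal u IA) (@ideal_adjoin_sub A u) nu).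
  exact: ideal_adjoin_mem.
apply/prime_idealE; split=> //; first by move=> A1; apply: (Aa 0%N); rewrite expr0.
move=> x y Axy; apply: contrapT => /not_orP[/adjoin_power[i [w1 [r1 [Aw1 E1]]]]].
move=> /adjoin_power[j [w2 [r2 [Aw2 E2]]]].
apply: (Aa (i + j)%N); rewrite exprD E1 E2.
have -> : (w1 + r1 * x) * (w2 + r2 * y) =
    w1 * (w2 + r2 * y) + (w2 * (r1 * x) + (r1 * r2) * (x * y)) by ring.
apply: (AD); first by rewrite mulrC; exact: AM.
by apply: (AD); [rewrite mulrC|]; exact: AM.
Qed.

(* The alternative [A = set0] only serves the empty chain in Zorn's lemma. *)
Lemma exists_maximal_avoiding a I : ideal I -> avoids_powers a I ->
  exists A, [/\ ideal A, I `<=` A, avoids_powers a A &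
    forall B, ideal B -> A `<=` B -> avoids_powers a B -> B `<=` A].
Proof.
move=> II Ia.
pose admissible (A : set R) := [/\ A = set0 \/ I `<=` A, (forall x y, A x -> A y -> A (x + y)),
  (forall r x, A x -> A (r * x)) & avoids_powers a A].
have [A [[AI AD AM Aa] Amax]] : exists A, admissible A /\ forall B, A `<` B -> ~ admissible B.
  apply: Zorn_bigcup => F FP Ftot; split.
  - have [[A0 [FA0 nA0]]|nF] := pselect (exists A, F A /\ A <> set0).
      right=> x Ix; exists A0 => //.
      by case: (FP _ FA0) => -[//|H] _ _ _; exact: H.
    left; apply/seteqP; split=> x // [A FA Ax].
    have [A0|An] := pselect (A = set0); first by rewrite A0 in Ax.
    by case: nF; exists A.
  - move=> x y [A FA Ax] [B FB By].
    case: (Ftot _ _ FA FB) => [AB|BA].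
      by exists B => //; case: (FP _ FB) => _ H _ _; apply: H => //; exact: AB.
    by exists A => //; case: (FP _ FA) => _ H _ _; apply: H => //; exact: BA.
  - by move=> r x [A FA Ax]; exists A => //; case: (FP _ FA) => _ _ H _; exact: H.
  - by move=> n [A FA Ax]; case: (FP _ FA) => _ _ _ H; exact: (H n).
have IA : I `<=` A.
  case: AI => // A0; exfalso; have [I0 ID IM] := II.
  apply: (Amax I); last by split=> //; right.
  by rewrite A0; split=> // H; exact: (H 0 I0).
have A0 : A 0 by apply: IA; case: II.
exists A; split=> // B IB AB Ba; apply: contrapT => nBA.
apply: (Amax B); first by split=> // BA; apply: nBA; rewrite BA.
by case: IB => _ BD BM; split=> //; right=> z /IA /AB.
Qed.

Lemma exists_prime_avoiding a I : ideal I -> avoids_powers a I ->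
  exists P, [/\ prime_ideal P, I `<=` P & ~ P a].
Proof.
move=> II Ia; have [A [IA sIA Aa Amax]] := exists_maximal_avoiding II Ia.
exists A; split=> //; first exact: maximal_avoiding_prime Amax.
by rewrite -[a]expr1; exact: Aa.
Qed.

Lemma ideal0 : ideal (fun z => z = 0).
Proof. by split=> // [_ _ -> ->|b _ ->]; rewrite ?addr0 ?mulr0. Qed.

Lemma nilpotent_of_prime_ideals x :
  (forall P, prime_ideal P -> P x) -> exists n, x ^+ n = 0.
Proof.
move=> H; apply: contrapT => /forallNP xn.
have [P [PP _ Px]] := exists_prime_avoiding ideal0 xn.
exact: Px (H P PP).
Qed.

Lemma ideal_one_of_primes I : ideal I ->
  (forall P, prime_ideal P -> exists2 x, I x & ~ P x) -> I 1.
Proof.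
move=> II HI; apply: contrapT => I1.
have [|P [PP IP _]] := @exists_prime_avoiding 1 I II.
  by move=> n; rewrite expr1n.
by have [x /IP Px] := HI P PP.
Qed.

Lemma nilpotent_sum (J : Type) (r : seq J) (Q : pred J) (F : J -> R) :
  (forall i, Q i -> exists n, F i ^+ n = 0) -> exists n, (\sum_(i <- r | Q i) F i) ^+ n = 0.
Proof.
move=> H; apply: nilpotent_of_prime_ideals => P PP; apply: (prime_ideal_sum PP) => i Qi.
by have [n Fn] := H i Qi; exact: (prime_ideal_nilpotent PP Fn).
Qed.

Definition span (G : R -> Prop) : R -> Prop := fun x =>
  exists2 l : seq (R * R), (forall p, p \in l -> G p.2) & x = \sum_(p <- l) p.1 * p.2.

Lemma span_ideal G : ideal (span G).
Proof.
split.
- by exists [::]; rewrite ?big_nil.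
- move=> _ _ [l1 G1 ->] [l2 G2 ->]; exists (l1 ++ l2); last by rewrite big_cat.
  by move=> p; rewrite mem_cat => /orP[/G1|/G2].
- move=> a _ [l Gl ->]; exists [seq (a * p.1, p.2) | p <- l]; first by move=> p /mapP[q /Gl ? ->].
  by rewrite big_map mulr_sumr; apply: eq_bigr => p _; rewrite mulrA.
Qed.

Lemma span_mem G s : G s -> span G s.
Proof.
by move=> Gs; exists [:: (1, s)]; [move=> p; rewrite mem_seq1 => /eqP ->|rewrite big_seq1 mul1r].
Qed.

Lemma idem_of_comaximal_nilpotent x y : x + y = 1 -> (exists n, (x * y) ^+ n = 0) ->
  exists e, e * e = e /\ forall P, prime_ideal P -> (P x -> P e) /\ (P y -> ~ P e).
Proof.
move=> xy1 [n xyn]; pose X := x ^+ n.+1; pose Y := y ^+ n.+1.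
have XY : X * Y = 0 by rewrite /X /Y -exprMn exprS xyn mulr0.
have [s [r sXrY]] : exists s r, s * X + r * Y = 1.
  have J1 := ideal_one_of_primes (ideal_adjoin_ideal Y (ideal_adjoin_ideal X ideal0)).
  have [P PP|w [r [[_ [s [-> ->]]] ->]]] := J1; last by exists s, r; rewrite add0r.
  have [PX|nPX] := pselect (P X); last first.
    by exists X => //; apply: ideal_adjoin_sub; exact: ideal_adjoin_mem ideal0.
  exists Y; first exact: ideal_adjoin_mem (ideal_adjoin_ideal X ideal0).
  move=> PY; apply: (prime_ideal_proper PP); rewrite -xy1.
  by apply: (prime_idealD PP); [exact: (prime_idealX PP PX)|exact: (prime_idealX PP PY)].
exists (s * X); split.
  have -> : s * X * (s * X) = s * X * (s * X + r * Y) - s * r * (X * Y) by ring.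
  by rewrite sXrY XY mulr0 subr0 mulr1.
move=> P PP; split=> [Px|Py PsX].
  by apply: (prime_idealMl PP); rewrite /X exprS; exact: prime_idealMr.
apply: (prime_ideal_proper PP); rewrite -sXrY; apply: (prime_idealD PP) => //.
by apply: (prime_idealMl PP); rewrite /Y exprS; exact: prime_idealMr.
Qed.

Section LocallyConstant.
Variables (N : Type) (g : (R -> Prop) -> N).
Hypothesis gloc : @locconst N (ring_of R) g.

Lemma locconst_fiber_cover v : exists x y, [/\ x + y = 1,
  forall P, prime_ideal P -> g P <> v -> P x & forall P, prime_ideal P -> g P = v -> P y].
Proof.
pose inside s := forall q, prime_ideal q -> ~ q s -> g q = v.
pose outside s := forall q, prime_ideal q -> ~ q s -> g q <> v.
have [l lG l1] : span (fun s => inside s \/ outside s) 1.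
  apply: ideal_one_of_primes (span_ideal _) _ => P PP.
  have [s [_ Ps Hs]] := gloc PP; exists s => //; apply: span_mem.
  by have [gv|gv] := pselect (g P = v); [left|right] => q qq qs; rewrite (Hs q qq qs).
exists (\sum_(p <- l | `[< inside p.2 >]) p.1 * p.2).
exists (\sum_(p <- l | ~~ `[< inside p.2 >]) p.1 * p.2); split.
- by rewrite l1 [RHS](bigID (fun p => `[< inside p.2 >])).
- move=> P PP gv; apply: (prime_ideal_sum PP) => p /asboolP ins.
  by apply: (prime_idealMl PP); apply: contrapT => ps; exact: gv (ins P PP ps).
- move=> P PP gv; rewrite big_seq_cond; apply: (prime_ideal_sum PP) => p /andP[pl /asboolPn ins].
  apply: (prime_idealMl PP); apply: contrapT => ps.
  by case: (lG p pl) => // out; exact: out P PP ps gv.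
Qed.

Lemma locconst_fiber_idem v : exists e, e * e = e /\
  forall P, prime_ideal P -> (g P = v <-> ~ P e).
Proof.
have [x [y [xy1 xP yP]]] := locconst_fiber_cover v.
have [|e [ee He]] := idem_of_comaximal_nilpotent xy1.
  apply: nilpotent_of_prime_ideals => P PP; have [gv|gv] := pselect (g P = v).
    by apply: (prime_idealMl PP); exact: yP.
  by apply: (prime_idealMr PP); exact: xP.
exists e; split=> // P PP; split; first by move=> /(yP P PP); exact: (He P PP).2.
by move=> nPe; apply: contrapT => /(xP P PP) /((He P PP).1).
Qed.

Lemma locconst_eq_of_idem P P' : prime_ideal P -> prime_ideal P' ->
  (forall e, e * e = e -> P e <-> P' e) -> g P = g P'.
Proof.
move=> PP PP' HP; have [e [ee He]] := locconst_fiber_idem (g P).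
by symmetry; apply/(He P' PP'); rewrite -(HP e ee); apply/(He P PP).
Qed.

End LocallyConstant.

End PrimeIdeals.

(** * The rings B[[t]] and B((t)) *)

Section PowerSeries.
Variable B : comPzRingType.

Definition powser := nat -> B.
HB.instance Definition _ := Choice.copy powser (nat -> B).

Definition ps_add (f g : powser) : powser := fun n => f n + g n.
Definition ps_opp (f : powser) : powser := fun n => - f n.

Fact ps_addA : associative ps_add.
Proof. by move=> f g h; apply/funext => n; rewrite /ps_add addrA. Qed.
Fact ps_addC : commutative ps_add.
Proof. by move=> f g; apply/funext => n; rewrite /ps_add addrC. Qed.
Fact ps_add0 : left_id (fun _ => 0) ps_add.
Proof. by move=> f; apply/funext => n; rewrite /ps_add add0r. Qed.
Fact ps_addN : left_inverse (fun _ => 0) ps_opp ps_add.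
Proof. by move=> f; apply/funext => n; rewrite /ps_add /ps_opp addNr. Qed.

HB.instance Definition _ := GRing.isZmodule.Build powser ps_addA ps_addC ps_add0 ps_addN.

Lemma ps_mul_rev (f g : powser) n : ps_mul f g n = \sum_(i < n.+1) f (n - i)%N * g i.
Proof.
rewrite /ps_mul (reindex_inj rev_ord_inj) /=.
by apply: eq_bigr => i _; rewrite (sub_ordK i).
Qed.

Fact ps_mulA : associative (@ps_mul B).
Proof.
move=> p q r; apply/funext=> n; rewrite [LHS]/ps_mul [RHS]ps_mul_rev.
pose c i j := p i * (q (n - i - j)%N * r j).
transitivity (\sum_(i < n.+1) \sum_(j < n.+1 | (j <= n - i)%N) c i j).
  apply: eq_bigr => /= i _; rewrite ps_mul_rev big_distrr /=.
  by rewrite (big_ord_narrow_leq (leq_subr _ _)).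
rewrite (exchange_big_dep predT) //=; apply: eq_bigr => j _.
transitivity (\sum_(i < n.+1 | (i <= n - j)%N) c i j).
  apply: eq_bigl => i; rewrite -ltnS -(ltnS i) -!subSn ?leq_ord //.
  by rewrite -subn_gt0 -(subn_gt0 i) -!subnDA addnC.
rewrite (big_ord_narrow_leq (leq_subr _ _)) /ps_mul big_distrl /=.
by apply: eq_bigr => i _; rewrite /c -!subnDA addnC mulrA.
Qed.

Fact ps_mulC : commutative (@ps_mul B).
Proof.
move=> f g; apply/funext => n; rewrite ps_mul_rev /ps_mul.
by apply: eq_bigr => i _; rewrite mulrC.
Qed.

Fact ps_mul1 : left_id (fun n => (n == 0%N)%:R) (@ps_mul B).
Proof.
move=> f; apply/funext => n; rewrite /ps_mul big_ord_recl subn0 /= mul1r.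
by rewrite big1 ?addr0 // => i _; rewrite /= mul0r.
Qed.

Fact ps_mulDl : left_distributive (@ps_mul B) ps_add.
Proof.
move=> f g h; apply/funext => n; rewrite /ps_mul /ps_add -big_split /=.
by apply: eq_bigr => i _; rewrite mulrDl.
Qed.

HB.instance Definition _ :=
  GRing.Zmodule_isComPzRing.Build powser ps_mulA ps_mulC ps_mul1 ps_mulDl.

Lemma ps_mulE (f g : powser) : f * g = ps_mul f g. Proof. by []. Qed.

End PowerSeries.

Section LaurentProduct.
Variable B : comPzRingType.
Implicit Types (f g : int -> B) (n m : nat).

Definition vanish_below n f := forall k : int, k < - n%:Z -> f k = 0.

(* [shift n f] is the power series [t ^ n * f]. *)
Definition shift n f : powser B := fun i => f (i%:Z - n%:Z).

(* [ls_mul] computed with arbitrary valid lower bounds instead of those picked by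
   [ls_bound]. *)
Definition ls_mul_at n m f g : int -> B := fun k =>
  if 0 <= k + n%:Z + m%:Z then ps_mul (shift n f) (shift m g) (absz (k + n%:Z + m%:Z))
  else 0.

Lemma ls_bound_vanish f : ls_bounded f -> vanish_below (ls_bound f) f.
Proof.
move=> bf; rewrite /ls_bound; case: excluded_middle_informative => // H.
exact: (proj2_sig (ClassicalEpsilon.constructive_indefinite_description _ H)).
Qed.

Lemma vanish_below_bounded f n : vanish_below n f -> ls_bounded f.
Proof. by exists n. Qed.

Lemma vanish_below_le f n n' : (n <= n')%N -> vanish_below n f -> vanish_below n' f.
Proof. by move=> le H k kn; apply: H; lia. Qed.

Lemma ls_mul_at_bound f g : ls_mul f g = ls_mul_at (ls_bound f) (ls_bound g) f g.
Proof.
apply/funext => k; rewrite /ls_mul /ls_mul_at /=.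
set n := ls_bound f; set m := ls_bound g.
case: ifP => // H; apply: eq_bigr => j _; rewrite /shift; congr (_ * g _).
have := ltn_ord j; rewrite ltnS => jN.
have E : Posz (absz (k + n%:Z + m%:Z)) = k + n%:Z + m%:Z by rewrite gez0_abs.
by move: E jN; set N := absz _; move=> E jN; lia.
Qed.

Definition ps_tmul (x : powser B) : powser B := fun i => if i is i'.+1 then x i' else 0.

Lemma ps_mul_tmul0 (x y : powser B) : ps_mul (ps_tmul x) y 0 = 0.
Proof. by rewrite /ps_mul big_ord_recl big_ord0 /= mul0r addr0. Qed.

Lemma ps_mul_tmulS (x y : powser B) n : ps_mul (ps_tmul x) y n.+1 = ps_mul x y n.
Proof.
rewrite /ps_mul big_ord_recl /= mul0r add0r; apply: eq_bigr => i _.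
by rewrite /bump /= add1n subSS.
Qed.

Lemma shift_succ f n : vanish_below n f -> shift n.+1 f = ps_tmul (shift n f).
Proof.
move=> vf; apply/funext => -[|i]; rewrite /shift /=; first by apply: vf; lia.
by congr f; lia.
Qed.

Lemma ls_mul_at_succl f g n m : vanish_below n f -> ls_mul_at n.+1 m f g = ls_mul_at n m f g.
Proof.
move=> vf; apply/funext => k; rewrite /ls_mul_at shift_succ //.
case: ifP => H1; case: ifP => H2.
- have -> : absz (k + n.+1%:Z + m%:Z) = (absz (k + n%:Z + m%:Z)).+1 by lia.
  by rewrite ps_mul_tmulS.
- have -> : absz (k + n.+1%:Z + m%:Z) = 0%N by lia.
  by rewrite ps_mul_tmul0.
- lia.
- by [].
Qed.

Lemma ls_mul_atC f g n m : ls_mul_at n m f g = ls_mul_at m n g f.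
Proof.
apply/funext => k; rewrite /ls_mul_at.
have -> : k + n%:Z + m%:Z = k + m%:Z + n%:Z by ring.
by case: ifP => // _; rewrite -ps_mulE mulrC.
Qed.

Lemma ls_mul_at_addl f g n m a : vanish_below n f -> ls_mul_at (n + a) m f g = ls_mul_at n m f g.
Proof.
move=> vf; elim: a => [|a IH]; first by rewrite addn0.
by rewrite addnS ls_mul_at_succl ?IH //; apply: vanish_below_le vf; rewrite leq_addr.
Qed.

Lemma ls_mul_at_indep f g n m n' m' :
  vanish_below n f -> vanish_below n' f -> vanish_below m g -> vanish_below m' g ->
  ls_mul_at n m f g = ls_mul_at n' m' f g.
Proof.
move=> vf vf' vg vg'.
have E a b c d : vanish_below a f -> vanish_below b g ->
    ls_mul_at a b f g = ls_mul_at (a + c) (b + d) f g.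
  by move=> va vb; rewrite [RHS]ls_mul_at_addl // [RHS]ls_mul_atC [RHS]ls_mul_at_addl // ls_mul_atC.
by rewrite (E n m n' m') // (E n' m' n m) // addnC [(m' + m)%N]addnC.
Qed.

Lemma ls_mulE f g n m : ls_bounded f -> ls_bounded g ->
  vanish_below n f -> vanish_below m g -> ls_mul f g = ls_mul_at n m f g.
Proof.
move=> bf bg vf vg; rewrite ls_mul_at_bound.
by apply: ls_mul_at_indep => //; exact: ls_bound_vanish.
Qed.

Lemma ls_mul_at_vanish f g n m : vanish_below (n + m) (ls_mul_at n m f g).
Proof. by move=> k kn; rewrite /ls_mul_at; case: ifP => // H; lia. Qed.

Lemma shift_ls_mul_at f g n m : shift (n + m) (ls_mul_at n m f g) = ps_mul (shift n f) (shift m g).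
Proof.
apply/funext => i.
have E : i%:Z - (n + m)%N%:Z + n%:Z + m%:Z = i%:Z by lia.
by rewrite {1}/shift /ls_mul_at E.
Qed.

End LaurentProduct.

Section LaurentRing.
Variable B : comPzRingType.
Implicit Types (f g : int -> B).

Definition laurent := {f : int -> B | ls_bounded f}.
HB.instance Definition _ := gen_eqMixin laurent.
HB.instance Definition _ := gen_choiceMixin laurent.

Definition lcoef (x : laurent) : int -> B := proj1_sig x.

Lemma lcoef_inj (x y : laurent) : lcoef x = lcoef y -> x = y.
Proof.
case: x => f hf; case: y => g hg /= E; subst g; congr exist; exact: Prop_irrelevance.
Qed.

Lemma lcoef_bounded (x : laurent) : ls_bounded (lcoef x). Proof. exact: proj2_sig x. Qed.
Arguments lcoef_bounded x : clear implicits.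

Lemma lcoef_vanish (x : laurent) : vanish_below (ls_bound (lcoef x)) (lcoef x).
Proof. exact: ls_bound_vanish (lcoef_bounded x). Qed.
Arguments lcoef_vanish x : clear implicits.

Lemma ls_bounded0 : ls_bounded (fun _ : int => (0 : B)). Proof. by exists 0%N. Qed.

Lemma ls_bounded1 : ls_bounded (fun k : int => ((k == 0)%:R : B)).
Proof. by exists 0%N => k kn; case: eqP => // E; subst k. Qed.

Lemma ls_boundedD f g : ls_bounded f -> ls_bounded g -> ls_bounded (fun k => f k + g k).
Proof.
move=> [n Hn] [m Hm]; exists (maxn n m) => k kn.
by rewrite Hn ?Hm ?addr0 //; lia.
Qed.

Lemma ls_boundedN f : ls_bounded f -> ls_bounded (fun k => - f k).
Proof. by move=> [n Hn]; exists n => k kn; rewrite Hn ?oppr0. Qed.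

Lemma ls_boundedM f g : ls_bounded f -> ls_bounded g -> ls_bounded (ls_mul f g).
Proof.
move=> bf bg; rewrite (ls_mulE bf bg (ls_bound_vanish bf) (ls_bound_vanish bg)).
exact: vanish_below_bounded (@ls_mul_at_vanish _ _ _ _ _).
Qed.

Definition ls_zero : laurent := exist _ _ ls_bounded0.
Definition ls_one : laurent := exist _ _ ls_bounded1.
Definition ls_plus (x y : laurent) : laurent :=
  exist _ _ (ls_boundedD (lcoef_bounded x) (lcoef_bounded y)).
Definition ls_neg (x : laurent) : laurent := exist _ _ (ls_boundedN (lcoef_bounded x)).
Definition ls_times (x y : laurent) : laurent :=
  exist _ _ (ls_boundedM (lcoef_bounded x) (lcoef_bounded y)).

Fact ls_plusA : associative ls_plus.
Proof. by move=> x y z; apply: lcoef_inj; apply/funext => k /=; rewrite addrA. Qed.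
Fact ls_plusC : commutative ls_plus.
Proof. by move=> x y; apply: lcoef_inj; apply/funext => k /=; rewrite addrC. Qed.
Fact ls_plus0 : left_id ls_zero ls_plus.
Proof. by move=> x; apply: lcoef_inj; apply/funext => k /=; rewrite add0r. Qed.
Fact ls_plusN : left_inverse ls_zero ls_neg ls_plus.
Proof. by move=> x; apply: lcoef_inj; apply/funext => k /=; rewrite addNr. Qed.

HB.instance Definition _ := GRing.isZmodule.Build laurent ls_plusA ls_plusC ls_plus0 ls_plusN.

Lemma ls_mul_lcoefE (x y : laurent) n m : vanish_below n (lcoef x) -> vanish_below m (lcoef y) ->
  ls_mul (lcoef x) (lcoef y) = ls_mul_at n m (lcoef x) (lcoef y).
Proof. by apply: ls_mulE; exact: lcoef_bounded. Qed.

Fact ls_timesA : associative ls_times.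
Proof.
move=> x y z; apply: lcoef_inj => /=.
have vx := lcoef_vanish x; have vy := lcoef_vanish y; have vz := lcoef_vanish z.
have vxy := @ls_mul_at_vanish _ (lcoef x) (lcoef y) (ls_bound (lcoef x)) (ls_bound (lcoef y)).
have vyz := @ls_mul_at_vanish _ (lcoef y) (lcoef z) (ls_bound (lcoef y)) (ls_bound (lcoef z)).
rewrite (ls_mulE (lcoef_bounded y) (lcoef_bounded z) vy vz).
rewrite (ls_mulE (lcoef_bounded x) (lcoef_bounded y) vx vy).
rewrite (ls_mulE (lcoef_bounded x) (vanish_below_bounded vyz) vx vyz).
rewrite (ls_mulE (vanish_below_bounded vxy) (lcoef_bounded z) vxy vz).
apply/funext => k; rewrite /ls_mul_at -/(ls_mul_at _ _ _ _) !shift_ls_mul_at !PoszD !addrA.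
by case: ifP => // _; rewrite -!ps_mulE mulrA.
Qed.

Fact ls_timesC : commutative ls_times.
Proof.
move=> x y; apply: lcoef_inj => /=.
by rewrite !(ls_mul_lcoefE (lcoef_vanish _) (lcoef_vanish _)) ls_mul_atC.
Qed.

Fact ls_times1 : left_id ls_one ls_times.
Proof.
move=> x; apply: lcoef_inj => /=.
have vx := lcoef_vanish x; set n := ls_bound (lcoef x) in vx *.
have v1 : vanish_below 0 (fun k : int => ((k == 0)%:R : B)).
  by move=> k kn; case: eqP => // E; subst k.
rewrite (ls_mulE ls_bounded1 (lcoef_bounded x) v1 vx); apply/funext => k; rewrite /ls_mul_at.
have -> : shift 0 (fun k : int => ((k == 0)%:R : B)) = 1.
  by apply/funext => i; rewrite /shift /= subr0.
rewrite -ps_mulE mul1r; case: ifP => H; first by rewrite /shift; congr (lcoef x _); lia.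
by rewrite vx //; lia.
Qed.

Fact ls_timesDl : left_distributive ls_times ls_plus.
Proof.
move=> x y z; apply: lcoef_inj => /=.
have vx := lcoef_vanish x; have vy := lcoef_vanish y; have vz := lcoef_vanish z.
set nx := ls_bound (lcoef x) in vx *; set ny := ls_bound (lcoef y) in vy *.
have vx' := vanish_below_le (leq_maxl nx ny) vx.
have vy' := vanish_below_le (leq_maxr nx ny) vy.
have vxy : vanish_below (maxn nx ny) (fun k => lcoef x k + lcoef y k).
  by move=> k kn; rewrite vx' // vy' // addr0.
rewrite (ls_mulE (ls_boundedD (lcoef_bounded x) (lcoef_bounded y)) (lcoef_bounded z) vxy vz).
rewrite (ls_mul_lcoefE vx' vz) (ls_mul_lcoefE vy' vz); apply/funext => k; rewrite /ls_mul_at.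
by case: ifP => _; [rewrite -!ps_mulE mulrDl|rewrite addr0].
Qed.

HB.instance Definition _ :=
  GRing.Zmodule_isComPzRing.Build laurent ls_timesA ls_timesC ls_times1 ls_timesDl.

Lemma lcoefD (x y : laurent) k : lcoef (x + y) k = lcoef x k + lcoef y k. Proof. by []. Qed.
Lemma lcoefB (x y : laurent) k : lcoef (x - y) k = lcoef x k - lcoef y k. Proof. by []. Qed.
Lemma lcoefN (x : laurent) k : lcoef (- x) k = - lcoef x k. Proof. by []. Qed.
Lemma lcoef0 k : lcoef 0 k = 0. Proof. by []. Qed.
Lemma lcoef1 k : lcoef 1 k = (k == 0)%:R. Proof. by []. Qed.

Lemma lcoefM (x y : laurent) n m k : vanish_below n (lcoef x) -> vanish_below m (lcoef y) ->
  lcoef (x * y) k = if 0 <= k + n%:Z + m%:Z then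
     ps_mul (shift n (lcoef x)) (shift m (lcoef y)) (absz (k + n%:Z + m%:Z)) else 0.
Proof. by move=> vx vy; rewrite /= (ls_mul_lcoefE vx vy). Qed.

Lemma lcoef_sum (J : Type) (r : seq J) (P : pred J) (F : J -> laurent) k :
  lcoef (\sum_(i <- r | P i) F i) k = \sum_(i <- r | P i) lcoef (F i) k.
Proof.
elim: r => [|i r IH]; first by rewrite !big_nil.
by rewrite !big_cons; case: ifP => // _; rewrite lcoefD IH.
Qed.

End LaurentRing.
Arguments lcoef_bounded {B} x.
Arguments lcoef_vanish {B} x.

Section Monomials.
Variable B : comPzRingType.
Local Notation laurent := (laurent B).

Lemma ps_to_ls_vanish (x : powser B) : vanish_below 0 (ps_to_ls x).
Proof. by case. Qed.
Arguments ps_to_ls_vanish x : clear implicits.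

Definition ls_of_ps (x : powser B) : laurent :=
  exist _ _ (vanish_below_bounded (ps_to_ls_vanish x)).

Lemma ps_to_lsM (x y : powser B) : ls_mul (ps_to_ls x) (ps_to_ls y) = ps_to_ls (ps_mul x y).
Proof.
have bx := vanish_below_bounded (ps_to_ls_vanish x).
have by_ := vanish_below_bounded (ps_to_ls_vanish y).
rewrite (ls_mulE bx by_ (ps_to_ls_vanish x) (ps_to_ls_vanish y)).
have sh0 z : shift 0 (ps_to_ls z) = z by apply/funext => i; rewrite /shift subr0.
by apply/funext => k; rewrite /ls_mul_at !sh0 !addr0; case: k.
Qed.

Lemma ls_of_psM x y : ls_of_ps (x * y) = ls_of_ps x * ls_of_ps y.
Proof. by apply: lcoef_inj; rewrite /= ps_to_lsM. Qed.

Definition psmono (b : B) (p : nat) : powser B := fun q => if q == p then b else 0.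

Lemma psmonoM a b p q : ps_mul (psmono a p) (psmono b q) = psmono (a * b) (p + q).
Proof.
apply/funext => n; rewrite /ps_mul /psmono.
case: (leqP p n) => pn.
  rewrite (bigD1 (Ordinal (pn : (p < n.+1)%N))) //= eqxx big1 ?addr0.
    by case: eqP => E; case: eqP => E'; rewrite ?mulr0 //; lia.
  by move=> i /eqP ip; case: eqP => E; [case: ip; apply: val_inj|rewrite mul0r].
case: eqP => E; first lia.
by rewrite big1 // => i _; case: eqP => E'; rewrite ?mul0r //; have := ltn_ord i; lia.
Qed.

Lemma lmono_vanish (b : B) (i : int) : vanish_below (absz i) (fun j => if j == i then b else 0).
Proof. by move=> k ki; case: eqP => // E; lia. Qed.
Arguments lmono_vanish b i : clear implicits.

Definition lmono (b : B) (i : int) : laurent := exist _ _ (vanish_below_bounded (lmono_vanish b i)).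

Lemma lcoef_lmono b i j : lcoef (lmono b i) j = if j == i then b else 0. Proof. by []. Qed.

Lemma shift_lmono (b : B) (i : int) n : 0 <= i + n%:Z ->
  shift n (lcoef (lmono b i)) = psmono b (absz (i + n%:Z)).
Proof.
move=> H; apply/funext => q; rewrite /shift /psmono lcoef_lmono.
have A : (absz (i + n%:Z))%:Z = i + n%:Z by rewrite gez0_abs.
by case: eqP => E; case: eqP => E' //; lia.
Qed.

Lemma lmonoM a b i j : lmono a i * lmono b j = lmono (a * b) (i + j).
Proof.
apply: lcoef_inj; apply/funext => k.
have va : vanish_below (absz i) (lcoef (lmono a i)) := lmono_vanish a i.
have vb : vanish_below (absz j) (lcoef (lmono b j)) := lmono_vanish b j.
rewrite (lcoefM k va vb) lcoef_lmono.
set n := absz i; set m := absz j.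
have Hi : 0 <= i + n%:Z by rewrite /n; case: (i) => c /=; lia.
have Hj : 0 <= j + m%:Z by rewrite /m; case: (j) => c /=; lia.
rewrite !shift_lmono // psmonoM /psmono; case: ifP => H; last first.
  by case: eqP => E //; move/negbT: H; lia.
have A1 : (absz (i + n%:Z))%:Z = i + n%:Z by rewrite gez0_abs.
have A2 : (absz (j + m%:Z))%:Z = j + m%:Z by rewrite gez0_abs.
have A3 : (absz (k + n%:Z + m%:Z))%:Z = k + n%:Z + m%:Z by rewrite gez0_abs.
by case: eqP => E; case: eqP => E' //; lia.
Qed.

Lemma lmonoD a b i : lmono (a + b) i = lmono a i + lmono b i.
Proof.
by apply: lcoef_inj; apply/funext => k; rewrite lcoefD !lcoef_lmono; case: eqP; rewrite ?addr0.
Qed.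

Lemma lmonoN b i : lmono (- b) i = - lmono b i.
Proof.
by apply: lcoef_inj; apply/funext => k; rewrite lcoefN !lcoef_lmono; case: eqP; rewrite ?oppr0.
Qed.

Lemma lmono0 i : lmono 0 i = 0.
Proof. by apply: lcoef_inj; apply/funext => k; rewrite lcoef_lmono lcoef0; case: eqP. Qed.

Lemma lmono1 : lmono 1 0 = 1.
Proof. by apply: lcoef_inj; apply/funext => k; rewrite lcoef_lmono lcoef1; case: eqP. Qed.

Lemma lmonoX b i n : lmono b i ^+ n = lmono (b ^+ n) (i * n%:Z).
Proof.
elim: n => [|n IH]; first by rewrite !expr0 mulr0 lmono1.
by rewrite !exprS IH lmonoM; congr lmono; lia.
Qed.

Lemma ls_of_ps_const b : ls_of_ps (const_ps b) = lmono b 0.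
Proof. by apply: lcoef_inj; apply/funext => -[n|n] //=; rewrite /const_ps. Qed.

End Monomials.
Arguments ps_to_ls_vanish {B} x.
Arguments lmono_vanish {B} b i.

(** * Idempotents of B((t)) are constants *)

Section CoefficientIdeal.
Variable B : comPzRingType.
Local Notation laurent := (laurent B).
Variable p : B -> Prop.
Hypothesis pp : prime_ideal p.

Definition ls_over (x : laurent) := forall k, p (lcoef x k).

Lemma ps_mul_lead (x y : powser B) i j :
  (forall i', (i' < i)%N -> p (x i')) -> (forall j', (j' < j)%N -> p (y j')) ->
  p (ps_mul x y (i + j)) -> p (x i * y j).
Proof.
move=> Hx Hy.
have lt : (i < (i + j).+1)%N by rewrite ltnS leq_addr.
rewrite /ps_mul (bigD1 (Ordinal lt)) //= addKn => H.
suff Hr : p (\sum_(l < (i + j).+1 | l != Ordinal lt) x l * y (i + j - l)%N).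
  by have := prime_idealB pp H Hr; rewrite addrK.
apply: (prime_ideal_sum pp) => l /eqP nl.
have : (l : nat) <> i by move=> E; apply: nl; apply: val_inj.
case: (ltngtP l i) => // c _; first by apply: (prime_idealMr pp); exact: Hx.
by apply: (prime_idealMl pp); apply: Hy; have := ltn_ord l; lia.
Qed.

Lemma first_coef_notin (z : laurent) n : vanish_below n (lcoef z) -> ~ ls_over z ->
  exists i, ~ p (shift n (lcoef z) i) /\ forall i', (i' < i)%N -> p (shift n (lcoef z) i').
Proof.
move=> vz /existsNP[k nk].
have ex : exists i, `[< ~ p (shift n (lcoef z) i) >].
  have kn : 0 <= k + n%:Z.
    by apply: contrapT => H; apply: nk; rewrite vz; [exact: prime_ideal0 pp|lia].
  exists (absz (k + n%:Z)); apply/asboolP; rewrite /shift.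
  by have -> : (absz (k + n%:Z))%:Z - n%:Z = k by rewrite gez0_abs //; lia.
case: (ex_minnP ex) => i /asboolP ni mini; exists i; split=> // i' lti.
by apply: contrapT => ni'; have := mini i' (introT (asboolP _) ni'); lia.
Qed.

Lemma ls_over_prime : prime_ideal ls_over.
Proof.
apply/prime_idealE; split.
- by move=> k; exact: prime_ideal0 pp.
- by move=> x y Px Py k; rewrite lcoefD; exact: (prime_idealD pp).
- move=> a x Px k; rewrite (lcoefM k (lcoef_vanish a) (lcoef_vanish x)).
  case: ifP => _; last exact: prime_ideal0 pp.
  by apply: (prime_ideal_sum pp) => i _; apply: (prime_idealMl pp); exact: Px.
- by move=> H; apply: (prime_ideal_proper pp); have := H 0; rewrite lcoef1.
move=> x y Pxy; apply: contrapT => /not_orP[/(first_coef_notin (lcoef_vanish x))[i [ni Hi]]].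
move=> /(first_coef_notin (lcoef_vanish y))[j [nj Hj]].
set nx := ls_bound (lcoef x) in ni Hi; set ny := ls_bound (lcoef y) in nj Hj.
have := Pxy ((i + j)%N%:Z - nx%:Z - ny%:Z).
rewrite (lcoefM _ (lcoef_vanish x) (lcoef_vanish y)) -/nx -/ny.
have -> : (i + j)%N%:Z - nx%:Z - ny%:Z + nx%:Z + ny%:Z = (i + j)%N%:Z by ring.
by move=> /= /(ps_mul_lead Hi Hj) /(prime_idealM pp)[].
Qed.

Lemma ls_over_lmono b i : p b -> ls_over (lmono b i).
Proof. by move=> pb k; rewrite lcoef_lmono; case: eqP => // _; exact: prime_ideal0 pp. Qed.

End CoefficientIdeal.

Section Order.
Variable B : comPzRingType.
Local Notation laurent := (laurent B).
Implicit Types (x y : laurent) (r s : int).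

Definition ord_ge r x := forall k, k < r -> lcoef x k = 0.

Lemma ord_ge_le r s x : s <= r -> ord_ge r x -> ord_ge s x.
Proof. by move=> le H k ks; apply: H; lia. Qed.

Lemma ord_geD r x y : ord_ge r x -> ord_ge r y -> ord_ge r (x + y).
Proof. by move=> Hx Hy k kr; rewrite lcoefD Hx ?Hy ?addr0. Qed.

Lemma ord_ge_sum r (J : Type) (l : seq J) (P : pred J) (F : J -> laurent) :
  (forall i, P i -> ord_ge r (F i)) -> ord_ge r (\sum_(i <- l | P i) F i).
Proof.
move=> H k kr; rewrite lcoef_sum big1 // => i Pi; exact: H.
Qed.

Lemma ord_ge_natmul r x n : ord_ge r x -> ord_ge r (x *+ n).
Proof.
move=> H; elim: n => [|n IH]; first by move=> k _; rewrite mulr0n.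
by rewrite mulrS; apply: ord_geD.
Qed.

Lemma ps_mul_low (f g : powser B) a b n : (forall i, (i < a)%N -> f i = 0) ->
  (forall j, (j < b)%N -> g j = 0) -> (n < a + b)%N -> ps_mul f g n = 0.
Proof.
move=> Hf Hg nab; rewrite /ps_mul big1 // => i _.
case: (ltnP i a) => ia; first by rewrite Hf ?mul0r.
by rewrite Hg ?mulr0 //; have := ltn_ord i; lia.
Qed.

Lemma ord_geM r s x y : ord_ge r x -> ord_ge s y -> ord_ge (r + s) (x * y).
Proof.
move=> Hx Hy k krs.
pose n := (ls_bound (lcoef x) + absz r)%N; pose m := (ls_bound (lcoef y) + absz s)%N.
have vx : vanish_below n (lcoef x) by apply: vanish_below_le (lcoef_vanish x); rewrite leq_addr.
have vy : vanish_below m (lcoef y) by apply: vanish_below_le (lcoef_vanish y); rewrite leq_addr.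
have Hr : (absz (r + n%:Z))%:Z = r + n%:Z by rewrite gez0_abs // /n; case: (r) => c /=; lia.
have Hs : (absz (s + m%:Z))%:Z = s + m%:Z by rewrite gez0_abs // /m; case: (s) => c /=; lia.
rewrite (lcoefM k vx vy); case: ifP => // H.
have Hk : (absz (k + n%:Z + m%:Z))%:Z = k + n%:Z + m%:Z by rewrite gez0_abs.
apply: (@ps_mul_low _ _ (absz (r + n%:Z)) (absz (s + m%:Z))); last by lia.
- by move=> i ir; rewrite /shift; apply: Hx; lia.
- by move=> j js; rewrite /shift; apply: Hy; lia.
Qed.

Lemma ord_geX r x n : ord_ge r x -> ord_ge (r * n%:Z) (x ^+ n).
Proof.
move=> H; elim: n => [|n IH].
  by rewrite expr0 mulr0 => k k0; rewrite lcoef1; case: eqP => // E; lia.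
by rewrite exprS; apply: (ord_ge_le _ (ord_geM H IH)); lia.
Qed.

Lemma ord_ge_nilpotentD (nu rho : laurent) (n M m : nat) : nu ^+ M = 0 ->
  ord_ge (- n%:Z) nu -> ord_ge 1 rho -> ord_ge (m%:Z - (n.+1 * M)%N%:Z) ((nu + rho) ^+ m).
Proof.
move=> nuM nun rho1; rewrite exprDn; apply: ord_ge_sum => i _; apply: ord_ge_natmul.
case: (leqP M (m - i)) => Mi.
  by rewrite -(subnK Mi) exprD nuM mulr0 mul0r => k _.
apply: (ord_ge_le _ (ord_geM (ord_geX (n := (m - i)%N) nun) (ord_geX (n := i) rho1))).
have := ltn_ord i; rewrite ltnS => im.
have : (n * (m - i) <= n * M)%N by rewrite leq_mul2l ltnW ?orbT.
by rewrite mulSn PoszD PoszM; lia.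
Qed.

End Order.

Section Idempotents.
Variable B : comPzRingType.
Local Notation laurent := (laurent B).

Definition ls_polar (x : laurent) (n : nat) : laurent :=
  \sum_(j < n.+1) lmono (lcoef x (- j%:Z)) (- j%:Z).

Lemma lcoef_ls_polar x n k :
  lcoef (ls_polar x n) k = if (- n%:Z <= k) && (k <= 0) then lcoef x k else 0.
Proof.
rewrite lcoef_sum; case: ifP => /andP H; last first.
  rewrite big1 // => j _; rewrite lcoef_lmono; case: eqP => // E.
  by case: H; have := ltn_ord j; lia.
have jlt : (absz k < n.+1)%N by lia.
rewrite (bigD1 (Ordinal jlt)) // lcoef_lmono /=.
have -> : - (absz k)%:Z = k by lia.
rewrite eqxx big1 ?addr0 // => j /eqP nj; case: eqP => // E.
by case: nj; apply: val_inj => /=; lia.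
Qed.

Lemma ord_ge_ls_polar x n : ord_ge (- n%:Z) (ls_polar x n).
Proof. by move=> k kn; rewrite lcoef_ls_polar; case: ifP => // /andP[]; lia. Qed.
Arguments ord_ge_ls_polar x n : clear implicits.

Lemma ord_ge_subr_polar x n : vanish_below n (lcoef x) -> ord_ge 1 (x - ls_polar x n).
Proof.
move=> vx k k1; rewrite lcoefB lcoef_ls_polar; case: ifP => H; first by rewrite subrr.
by rewrite subr0 vx //; move/negbT: H; lia.
Qed.

Lemma ls_polar_nilpotent x n : (forall k, exists N, lcoef x k ^+ N = 0) ->
  exists M, ls_polar x n ^+ M = 0.
Proof.
move=> xnil; apply: nilpotent_sum => j _; have [N xN] := xnil (- j%:Z).
by exists N; rewrite lmonoX xN lmono0.
Qed.

Lemma idem_nilpotent_coef_eq0 (x : laurent) :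
  x * x = x -> (forall k, exists N, lcoef x k ^+ N = 0) -> x = 0.
Proof.
move=> xx xnil; have vx := lcoef_vanish x; set n := ls_bound (lcoef x) in vx.
have [M nuM] := ls_polar_nilpotent n xnil.
have xX m : x ^+ m.+1 = x by elim: m => [|m IH]; rewrite ?expr1 // exprS IH.
have ordx (r : nat) : ord_ge r%:Z x.
  rewrite -(xX (n.+1 * M + r)%N) -[x](subrK (ls_polar x n)) addrC.
  apply: (ord_ge_le _ (ord_ge_nilpotentD nuM (ord_ge_ls_polar x n) (ord_ge_subr_polar vx))).
  by lia.
by apply: lcoef_inj; apply/funext => k; apply: (ordx (absz k).+1); lia.
Qed.

Lemma locconst_ls_over_idem (e : laurent) : e * e = e ->
  @locconst bool (ring_of B) (fun p => `[< ls_over p e >]).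
Proof.
move=> ee p pp; have [Pe|/existsNP[k nk]] := pselect (ls_over p e); last first.
  by exists (lcoef e k); split=> // q qq nq; rewrite !asboolF // => H; exact: nq (H k).
have /existsNP[k nk] : ~ ls_over p (1 - e).
  move=> P1e; apply: (prime_ideal_proper (ls_over_prime pp)).
  by rewrite -(subrK e 1); exact: (prime_idealD (ls_over_prime pp)).
exists (lcoef (1 - e) k); split=> // q qq nq; rewrite !asboolT //.
by case: (prime_ideal_idem (ls_over_prime qq) ee) => // H; case: nq; exact: H.
Qed.

Lemma ls_idem_const (e : laurent) : e * e = e -> exists2 eps : B, eps * eps = eps & e = lmono eps 0.
Proof.
move=> ee; have [eps [epse Heps]] := locconst_fiber_idem (locconst_ls_over_idem ee) false.
have over_eps p : prime_ideal p -> ls_over p e <-> p eps.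
  move=> pp; split=> [Pe|peps]; first by apply: contrapT => /(Heps p pp); rewrite asboolT.
  by apply: contrapT => nPe; apply: (Heps p pp).1 peps; rewrite asboolF.
pose c := lmono eps 0; pose d := e - c.
have cc : c * c = c by rewrite /c lmonoM epse addr0.
have d3 : d * d * d = d.
  have : d * d * d - d = (e * e - e) * (e + 1 - 3%:R * c) + (c * c - c) * (3%:R * e - c - 1).
    by rewrite /d; ring.
  by rewrite ee cc !subrr !mul0r addr0 => /eqP; rewrite subr_eq0 => /eqP.
have over_d p : prime_ideal p -> ls_over p d.
  move=> pp; have Pt := ls_over_prime pp; have [peps|npeps] := pselect (p eps).
    by apply: (prime_idealB Pt); [exact/(over_eps p pp)|exact: ls_over_lmono].
  have P1e : ls_over p (1 - e).
    by case: (prime_ideal_idem Pt ee) => // /(over_eps p pp).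
  have p1eps : p (1 - eps) by case: (prime_ideal_idem pp epse).
  have -> : d = lmono (1 - eps) 0 - (1 - e) by rewrite lmonoD lmonoN lmono1 /d /c; ring.
  by apply: (prime_idealB Pt) => //; exact: ls_over_lmono.
have dd0 : d * d = 0.
  apply: idem_nilpotent_coef_eq0; first by rewrite mulrA d3.
  move=> k; apply: nilpotent_of_prime_ideals => p pp.
  by apply: (prime_idealMl (ls_over_prime pp)); exact: over_d.
exists eps => //; apply/eqP; rewrite -subr_eq0 -/c -/d.
by rewrite -d3 dd0 mul0r.
Qed.

End Idempotents.

(** * Induced maps on locally constant functions *)

Section RingMaps.
Variables R1 R2 : ringdata.
Variable h : rd_T R1 -> rd_T R2.

Definition ringdata_hom :=
  [/\ rd_S R1 (rd_0 R1),
      (forall x y, rd_S R1 x -> rd_S R1 y -> rd_S R1 (rd_add R1 x y)),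
      (forall x y, rd_S R1 x -> rd_S R1 y -> rd_S R1 (rd_mul R1 x y)),
      (forall x, rd_S R1 x -> rd_S R2 (h x)) &
   [/\ h (rd_0 R1) = rd_0 R2, h (rd_1 R1) = rd_1 R2,
      (forall x y, rd_S R1 x -> rd_S R1 y -> h (rd_add R1 x y) = rd_add R2 (h x) (h y)) &
      (forall x y, rd_S R1 x -> rd_S R1 y -> h (rd_mul R1 x y) = rd_mul R2 (h x) (h y))]].

Hypothesis hh : ringdata_hom.

Lemma preim_prime Q : is_prime Q -> is_prime (Defs.preim h Q).
Proof.
case: hh => S0 SD SM Sh [h0 h1 hD hM] [QS [Q0 [QD [QM [Q1 QP]]]]].
split; first by move=> x [].
split; first by rewrite /Defs.preim h0.
split; first by move=> x y [Sx Qx] [Sy Qy]; split; [exact: SD|rewrite hD //; exact: QD].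
split.
  by move=> a x Sa [Sx Qx]; split; [exact: SM|rewrite hM //; apply: QM => //; exact: Sh].
split; first by move=> [_]; rewrite h1.
move=> a b Sa Sb [Sab]; rewrite hM // => /QP.
by case=> [||Qa|Qb]; [exact: Sh|exact: Sh|left|right].
Qed.

Lemma locconst_pullback (N : Type) (f : (rd_T R1 -> Prop) -> N) :
  locconst f -> locconst (pullback h f).
Proof.
move=> fl Q QQ; have [s [Ss ns Hs]] := fl _ (preim_prime QQ).
case: hh => _ _ _ Sh _; exists (h s); split=> [||q qq nq]; first exact: Sh.
  by move=> Qs; apply: ns.
by apply: Hs; [exact: preim_prime|case].
Qed.

Lemma induced_bijective_of_section (N : Type) (sigma : (rd_T R1 -> Prop) -> rd_T R2 -> Prop) :
  (forall P, is_prime P -> is_prime (sigma P)) ->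
  (forall g : (rd_T R2 -> Prop) -> N, locconst g -> locconst (fun P => g (sigma P))) ->
  (forall f : (rd_T R1 -> Prop) -> N, locconst f ->
     forall P, is_prime P -> f (Defs.preim h (sigma P)) = f P) ->
  (forall g : (rd_T R2 -> Prop) -> N, locconst g ->
     forall Q, is_prime Q -> g (sigma (Defs.preim h Q)) = g Q) ->
  induced_bijective N h.
Proof.
move=> sigmaP sigma_loc sigma_inj sigma_surj; split.
- exact: locconst_pullback.
- move=> f1 f2 l1 l2 H P PP.
  by rewrite -(sigma_inj _ l1 P PP) -(sigma_inj _ l2 P PP); exact: H (sigmaP P PP).
- move=> g gl; exists (fun P => g (sigma P)); split; first exact: sigma_loc.
  by move=> Q QQ; rewrite /pullback sigma_surj.
Qed.

End RingMaps.

Section LaurentSpectrum.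
Variable B : comPzRingType.
Local Notation laurent := (laurent B).

Definition mk_laurent f (H : ls_bounded f) : laurent := exist _ f H.

(* Ideals of [laurent] as predicates on the carrier of [ls_ring]. *)
Definition ls_pred (P : laurent -> Prop) : (int -> B) -> Prop :=
  fun f => exists H : ls_bounded f, P (mk_laurent H).

Lemma ls_pred_prime P : prime_ideal P -> @is_prime (ls_ring B) (ls_pred P).
Proof.
move=> PP.
split; first by move=> x [].
split; first by exists (ls_bounded0 B); exact: prime_ideal0 PP.
split.
  move=> x y [Hx Px] [Hy Py]; exists (ls_boundedD Hx Hy).
  have -> : mk_laurent (ls_boundedD Hx Hy) = mk_laurent Hx + mk_laurent Hy.
    exact: lcoef_inj.
  exact: (prime_idealD PP).
split.
  move=> a x Ha [Hx Px]; exists (ls_boundedM Ha Hx).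
  have -> : mk_laurent (ls_boundedM Ha Hx) = mk_laurent Ha * mk_laurent Hx.
    exact: lcoef_inj.
  exact: (prime_idealMl PP).
split.
  move=> [H PH]; apply: (prime_ideal_proper PP).
  by have <- : mk_laurent H = 1 by exact: lcoef_inj.
move=> a b Ha Hb [H PH].
have E : mk_laurent H = mk_laurent Ha * mk_laurent Hb by exact: lcoef_inj.
rewrite E in PH; case: (prime_idealM PP PH) => [Pa|Pb]; [left; exists Ha|right; exists Hb] => //.
Qed.

Lemma lcoef_pred_prime Q : @is_prime (ls_ring B) Q -> prime_ideal (fun x : laurent => Q (lcoef x)).
Proof.
case=> _ [Q0 [QD [QM [Q1 QP]]]]; apply/prime_idealE; split=> //.
- by move=> x y; apply: QD.
- by move=> a x; apply: QM; exact: lcoef_bounded.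
- by move=> a b /QP[||Qa|Qb]; [exact: lcoef_bounded|exact: lcoef_bounded|left|right].
Qed.

Lemma ls_pred_lcoef Q : @is_prime (ls_ring B) Q -> ls_pred (fun x : laurent => Q (lcoef x)) = Q.
Proof.
case=> QS _; apply/funext => f; apply/propext; split; first by case.
by move=> Qf; exists (QS f Qf).
Qed.

Lemma locconst_ls_pred (N : Type) (g : ((int -> B) -> Prop) -> N) :
  @locconst N (ls_ring B) g -> @locconst N (ring_of laurent) (fun P => g (ls_pred P)).
Proof.
move=> gl P PP; have [s [Ss ns Hs]] := gl _ (ls_pred_prime PP).
exists (mk_laurent Ss); split=> [||q qq nq] //; first by move=> Ps; apply: ns; exists Ss.
apply: Hs; first exact: ls_pred_prime.
move=> [H qs]; apply: nq.
by have <- : mk_laurent H = mk_laurent Ss by exact: lcoef_inj.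
Qed.

Lemma locconst_ls_over (N : Type) (g : ((int -> B) -> Prop) -> N) :
  @locconst N (ls_ring B) g -> @locconst N (ring_of B) (fun p => g (ls_pred (ls_over p))).
Proof.
move=> gl p pp; have [s [Ss ns Hs]] := gl _ (ls_pred_prime (ls_over_prime pp)).
have [k nk] : exists k, ~ p (s k) by apply/existsNP => H; apply: ns; exists Ss.
exists (s k); split=> // q qq nq.
by apply: Hs; [exact: ls_pred_prime (ls_over_prime qq)|case=> H /(_ k)].
Qed.

Lemma ls_pred_over_const p b : prime_ideal p ->
  ls_pred (ls_over p) (ps_to_ls (const_ps b)) <-> p b.
Proof.
move=> pp; split; first by case=> H /(_ 0).
move=> pb; exists (vanish_below_bounded (ps_to_ls_vanish (const_ps b))).
by have := ls_over_lmono pp 0 pb; rewrite -ls_of_ps_const.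
Qed.

End LaurentSpectrum.

Section SeriesMaps.
Variable B : comPzRingType.

Definition ps_coef0 (x : nat -> B) : B := x 0%N.

Lemma const_psE (b : B) : const_ps b = psmono b 0.
Proof. by apply/funext => n; rewrite /const_ps /psmono. Qed.

Lemma const_ps_hom : @ringdata_hom (ring_of B) (ps_ring B) (@const_ps B).
Proof.
split=> //; split=> /= [||x y _ _|x y _ _]; rewrite ?const_psE ?psmonoM //.
- by apply/funext => n; rewrite /psmono; case: eqP.
- by apply/funext => n; rewrite /psmono; case: eqP => // ->.
- by apply/funext => n; rewrite /psmono; case: eqP; rewrite ?addr0.
Qed.

Lemma ps_coef0_hom : @ringdata_hom (ps_ring B) (ring_of B) ps_coef0.
Proof.
split=> //; split=> //.
by move=> x y _ _; rewrite /ps_coef0 /= /ps_mul big_ord_recl big_ord0 addr0.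
Qed.

Lemma ps_to_ls_hom : @ringdata_hom (ps_ring B) (ls_ring B) (@ps_to_ls B).
Proof.
split=> // [x _|]; first exact: vanish_below_bounded (ps_to_ls_vanish x).
split=> /= [||x y _ _|x y _ _]; last by rewrite ps_to_lsM.
- by apply/funext => -[].
- by apply/funext => -[[|n]|n].
- by apply/funext => -[n|n] /=; rewrite ?addr0.
Qed.

Lemma ps_idem_const (e : powser B) : e * e = e -> exists eps, e = const_ps eps.
Proof.
move=> ee; have [|eps _ E] := @ls_idem_const B (ls_of_ps e); first by rewrite -ls_of_psM ee.
exists eps; apply/funext => n; have := congr1 (fun z => lcoef z (Posz n)) E.
by rewrite lcoef_lmono /const_ps eqz_nat.
Qed.

Lemma locconst_ps_eq_of_const (N : Type) (f : ((nat -> B) -> Prop) -> N) P P' :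
  @locconst N (ps_ring B) f -> @is_prime (ps_ring B) P -> @is_prime (ps_ring B) P' ->
  (forall b, P (const_ps b) <-> P' (const_ps b)) -> f P = f P'.
Proof.
move=> fl PP PP' HP; apply: (@locconst_eq_of_idem (powser B)) => // e /ps_idem_const[eps ->].
exact: HP.
Qed.

Lemma locconst_ls_eq_of_const (N : Type) (g : ((int -> B) -> Prop) -> N) Q Q' :
  @locconst N (ls_ring B) g -> @is_prime (ls_ring B) Q -> @is_prime (ls_ring B) Q' ->
  (forall b, Q (ps_to_ls (const_ps b)) <-> Q' (ps_to_ls (const_ps b))) -> g Q = g Q'.
Proof.
move=> gl QQ QQ' HQ; rewrite -(ls_pred_lcoef QQ) -(ls_pred_lcoef QQ').
apply: (locconst_eq_of_idem (locconst_ls_pred gl)); try exact: lcoef_pred_prime.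
by move=> e /ls_idem_const[eps _ ->]; rewrite -ls_of_ps_const; exact: HQ.
Qed.

Lemma const_ps_induced_bijective (N : Type) :
  @induced_bijective N (ring_of B) (ps_ring B) (@const_ps B).
Proof.
pose sigma := @Defs.preim (ps_ring B) (ring_of B) ps_coef0.
apply: (induced_bijective_of_section const_ps_hom (sigma := sigma)).
- by move=> P; exact: (preim_prime ps_coef0_hom).
- by move=> g; exact: (locconst_pullback ps_coef0_hom).
- move=> f _ P _; congr f; apply/funext => b; apply/propext.
  by split=> [[_ []]|Pb].
- move=> g gl Q QQ; apply: locconst_ps_eq_of_const => //.
    exact: (preim_prime ps_coef0_hom (preim_prime const_ps_hom QQ)).
  by move=> b; split=> [[_ [_]]|Qb].
Qed.

Lemma ps_to_ls_induced_bijective (N : Type) :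
  @induced_bijective N (ps_ring B) (ls_ring B) (@ps_to_ls B).
Proof.
pose sigma P := ls_pred (ls_over (@Defs.preim (ring_of B) (ps_ring B) (@const_ps B) P)).
have sigmaP P : @is_prime (ps_ring B) P -> @is_prime (ls_ring B) (sigma P).
  by move=> PP; apply/ls_pred_prime/ls_over_prime/(preim_prime const_ps_hom).
apply: (induced_bijective_of_section ps_to_ls_hom sigmaP).
- by move=> g gl; apply: (locconst_pullback const_ps_hom (locconst_ls_over gl)).
- move=> f fl P PP; apply: locconst_ps_eq_of_const => //.
    exact: (preim_prime ps_to_ls_hom (sigmaP P PP)).
  move=> b; have := ls_pred_over_const b (preim_prime const_ps_hom PP).
  by rewrite {2}/Defs.preim => E; split=> [[_ /E[]]|Pb]; last by split=> //; apply/E.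
- move=> g gl Q QQ; apply: locconst_ls_eq_of_const => //.
    exact: sigmaP (preim_prime ps_to_ls_hom QQ).
  move=> b; rewrite /sigma ls_pred_over_const; last first.
    exact: (preim_prime const_ps_hom (preim_prime ps_to_ls_hom QQ)).
  by split=> [[_ [_]]|].
Qed.

End SeriesMaps.

Theorem lemma2p5 (N : finType) (B : comPzRingType) :
  @induced_bijective N (ring_of B) (ps_ring B) (@const_ps B) /\
  @induced_bijective N (ps_ring B) (ls_ring B) (@ps_to_ls B).
Proof. by split; [exact: const_ps_induced_bijective|exact: ps_to_ls_induced_bijective]. Qed.
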